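(* Let $\Phi=\{\phi_j\}$ be a $\Phi$-sequence, $\nu$ a modulus of variation, and $1\le p<\infty$. Then $\Phi\mathrm{BV}\subseteq V_p[\nu]$ (as classes of functions on $[0,1]$) if and only if $$\limsup_{n\to\infty}\frac{1}{\nu(n)}\max_{1\le k\le n}k^{1/p}\,\Phi_k^{-1}(1)<\infty.$$
   Context: A $\Phi$-sequence is a sequence $\{\phi_j\}_{j\ge1}$ of increasing convex functions on $[0,\infty)$ with $\phi_j(0)=0$, $0<\phi_{j+1}(x)\le\phi_j(x)$ for all $j$ and $x>0$, and $\sum_j\phi_j(x)=\infty$ for $x>0$. $\Phi_n=\sum_{j=1}^n\phi_j$ and $\Phi_n^{-1}$ is its inverse function. $\mathrm{Var}_\Phi(f)=\sup\sum_{j=1}^n\phi_j(|f(I_j)|)$ over all finite collections $\{I_j\}$ of nonoverlapping subintervals of $[0,1]$, with $f(I)=f(\sup I)-f(\inf I)$; $\Phi\mathrm{BV}$ is the set of $f$ such that $\mathrm{Var}_\Phi(cf)<\infty$ for some $c>0$. A modulus of variation is a nondecreasing concave sequence of positive numbers $\nu(1),\nu(2),\dots$. $\upsilon_p(n,f)=\sup(\sum_{j=1}^n|f(I_j)|^p)^{1/p}$ over $n$ nonoverlapping subintervals of $[0,1]$, and $V_p[\nu]$ is the set of bounded $f$ on $[0,1]$ with $\sup_n\upsilon_p(n,f)/\nu(n)<\infty$. *)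

From Stdlib Require Import Reals List ClassicalEpsilon.
From Coquelicot Require Import Coquelicot.
Open Scope R_scope.

(* x^p for x >= 0, p > 0, with the convention 0^p = 0
   (Stdlib's Rpower 0 p is 1, hence this wrapper). *)
Definition rpow (x p : R) : R :=
  if Req_EM_T x 0 then 0 else Rpower x p.

(* A sequence phi_1, phi_2, ... is represented by phi : nat -> R -> R,
   using indices j >= 1 (phi 0 is unused). *)
Definition convex_on_nonneg (g : R -> R) : Prop :=
  forall x y t, 0 <= x -> 0 <= y -> 0 <= t <= 1 ->
    g (t * x + (1 - t) * y) <= t * g x + (1 - t) * g y.

Definition nondecr_on_nonneg (g : R -> R) : Prop :=
  forall x y, 0 <= x -> x <= y -> g x <= g y.

Fixpoint PhiSum (phi : nat -> R -> R) (n : nat) (x : R) : R :=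
  match n with
  | O => 0
  | S m => PhiSum phi m x + phi (S m) x
  end.

Definition is_Phi_sequence (phi : nat -> R -> R) : Prop :=
  (forall j, (1 <= j)%nat ->
      nondecr_on_nonneg (phi j) /\ convex_on_nonneg (phi j) /\ phi j 0 = 0) /\
  (forall j x, (1 <= j)%nat -> 0 < x -> 0 < phi (S j) x <= phi j x) /\
  (forall x, 0 < x -> 0 < phi 1%nat x) /\
  (forall x, 0 < x -> forall M, exists n, M < PhiSum phi n x).

Definition PhiInv (phi : nat -> R -> R) (n : nat) (y : R) : R :=
  epsilon (inhabits 0) (fun x => 0 <= x /\ PhiSum phi n x = y).

(* A finite collection of intervals I_1,...,I_m of [0,1] is a list of
   endpoint pairs (inf I_j, sup I_j). *)
Definition interval_in01 (ab : R * R) : Prop :=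
  0 <= fst ab /\ fst ab <= snd ab /\ snd ab <= 1.

Definition nonoverlap (ab cd : R * R) : Prop :=
  snd ab <= fst cd \/ snd cd <= fst ab.

Definition nonoverlapping (I : list (R * R)) : Prop :=
  List.Forall interval_in01 I /\
  forall i j, (i < length I)%nat -> (j < length I)%nat -> i <> j ->
    nonoverlap (nth i I (0, 0)) (nth j I (0, 0)).

Definition incr (f : R -> R) (ab : R * R) : R := f (snd ab) - f (fst ab).

Fixpoint PhiVarSum (phi : nat -> R -> R) (f : R -> R) (j0 : nat)
    (I : list (R * R)) : R :=
  match I with
  | nil => 0
  | ab :: I' => phi j0 (Rabs (incr f ab)) + PhiVarSum phi f (S j0) I'
  end.

Definition finite_PhiVar (phi : nat -> R -> R) (f : R -> R) : Prop :=
  exists M, forall I, nonoverlapping I -> PhiVarSum phi f 1 I <= M.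

Definition PhiBV (phi : nat -> R -> R) (f : R -> R) : Prop :=
  exists c, 0 < c /\ finite_PhiVar phi (fun x => c * f x).

Definition modulus_of_variation (nu : nat -> R) : Prop :=
  (forall n, (1 <= n)%nat -> 0 < nu n) /\
  (forall n, (1 <= n)%nat -> nu n <= nu (S n)) /\
  (forall n, (2 <= n)%nat -> nu (S n) + nu (pred n) <= 2 * nu n).

Definition pSum (p : R) (f : R -> R) (I : list (R * R)) : R :=
  rpow (fold_right Rplus 0 (map (fun ab => rpow (Rabs (incr f ab)) p) I)) (1 / p).

Definition bounded01 (f : R -> R) : Prop :=
  exists B, forall x, 0 <= x <= 1 -> Rabs (f x) <= B.

Definition Vp (p : R) (nu : nat -> R) (f : R -> R) : Prop :=
  bounded01 f /\
  exists M, forall n, (1 <= n)%nat -> forall I, nonoverlapping I ->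
    length I = n -> pSum p f I / nu n <= M.

Definition maxterm (phi : nat -> R -> R) (p : R) (n : nat) : R :=
  fold_right Rmax 0
    (map (fun k => Rpower (INR k) (1 / p) * PhiInv phi k 1) (seq 1 n)).

Definition crit_seq (phi : nat -> R -> R) (p : R) (nu : nat -> R) (n : nat) : R :=
  / nu n * maxterm phi p n.

(* Normalise [f] so that [Var_Phi(f) <= 1] and list the increments of [n]
   nonoverlapping intervals in decreasing order [a_1 >= ... >= a_n], so that
   [sum_j phi_j(a_j) <= 1].  Let [K] bound [k^(1/p) Phi_k^-1(1)] for [k <= n] and truncate
   the [a_j] at the dyadic levels [T, T/2, T/4, ...].  The number [N] of [a_j >= T]
   satisfies [Phi_N(T) <= 1], hence [N T^p <= K^p]; and as long as [K^p <= n T^p], taking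
   [m = ceil(K^p / T^p)] and using that [Phi_m(x)/m] decreases in [m] gives
   [N T^p <= 2 K^p Phi_N(T)], which is paid for by the drop of [sum_j phi_j(min(T, a_j))]
   when [T] is halved.  Summing over the levels, [sum_j a_j^p <= 3 4^p K^p].

   If the criterion fails, pick [k_i] with
   [4^i nu(k_i) < k_i^(1/p) Phi_(k_i)^-1(1)] and put [k_i] spikes of height
   [Phi_(k_i)^-1(1) / 2^i] in [(2^-(i+1), 2^-i)].  Every spike is an endpoint of at most
   two nondegenerate intervals of a nonoverlapping family, so
   [Var_Phi <= sum_i Phi_(2 k_i)(height_i) <= sum_i 2 / 2^i <= 4], whereas the [k_i] spikes
   of block [i] alone have p-variation [> 2^i nu(k_i)]. *)

From Stdlib Require Import Reals Lra Lia List Permutation Sorting Orders Mergesort.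
From Stdlib Require Import ClassicalEpsilon Classical FunctionalExtensionality.
From Coquelicot Require Import Coquelicot.
Open Scope R_scope.

Lemma Rpower_pos x p : 0 < Rpower x p.
Proof. apply exp_pos. Qed.

Lemma Rpower_div x y p : 0 < x -> 0 < y -> Rpower (x / y) p = Rpower x p / Rpower y p.
Proof.
  intros Hx Hy. unfold Rdiv. rewrite <- Rpower_mult_distr by (try apply Rinv_0_lt_compat; lra).
  f_equal. unfold Rpower. rewrite ln_Rinv by lra.
  replace (p * - ln y) with (- (p * ln y)) by ring. apply exp_Ropp.
Qed.

Lemma rpow_pos_eq x p : 0 < x -> rpow x p = Rpower x p.
Proof. intros Hx. unfold rpow. destruct (Req_EM_T x 0); [lra | reflexivity]. Qed.

Lemma rpow_0 p : rpow 0 p = 0.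
Proof. unfold rpow. destruct (Req_EM_T 0 0); [reflexivity | lra]. Qed.

Lemma rpow_nonneg x p : 0 <= rpow x p.
Proof. unfold rpow. destruct (Req_EM_T x 0); [lra | left; apply Rpower_pos]. Qed.

Lemma rpow_le x y p : 0 < p -> 0 <= x -> x <= y -> rpow x p <= rpow y p.
Proof.
  intros Hp [Hx|<-] Hxy.
  - rewrite !rpow_pos_eq by lra. apply Rle_Rpower_l; lra.
  - rewrite rpow_0. apply rpow_nonneg.
Qed.

Lemma rpow_mult x y p : 0 <= x -> 0 <= y -> rpow (x * y) p = rpow x p * rpow y p.
Proof.
  intros [Hx|<-] [Hy|<-]; rewrite ?Rmult_0_l, ?Rmult_0_r, ?rpow_0; try ring.
  rewrite !rpow_pos_eq by nra. symmetry. apply Rpower_mult_distr; assumption.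
Qed.

Lemma rpow_inv x p : 0 < p -> 0 <= x -> rpow (rpow x p) (1 / p) = x.
Proof.
  intros Hp [Hx|<-]; [|rewrite !rpow_0; reflexivity].
  rewrite (rpow_pos_eq x), rpow_pos_eq by (try apply Rpower_pos; lra).
  rewrite Rpower_mult. replace (p * (1 / p)) with 1 by (field; lra). apply Rpower_1, Hx.
Qed.


Lemma pow2_unbounded M : exists d, M < 2 ^ d.
Proof.
  destruct (INR_unbounded M) as [d Hd]. exists d.
  assert (INR d <= 2 ^ d); [|lra]. clear Hd.
  induction d as [|d IH]; [simpl; lra|].
  rewrite S_INR. change (2 ^ S d) with (2 * 2 ^ d).
  assert (1 <= 2 ^ d) by (apply pow_R1_Rle; lra). lra.
Qed.

Lemma ceil_nat r : 0 <= r -> exists m : nat, r <= INR m < r + 1.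
Proof.
  intros Hr. destruct (nfloor_ex r Hr) as [k [Hk1 Hk2]].
  destruct (Req_dec (INR k) r) as [E|E].
  - exists k. lra.
  - exists (S k). rewrite S_INR. lra.
Qed.

Lemma dyadic_Rpower_small p T C M : 1 <= p -> 0 < T -> 0 <= C -> 0 < M ->
  exists d, C * Rpower (T / 2 ^ d) p < M.
Proof.
  intros Hp HT HC HM. destruct (pow2_unbounded (C * Rpower T p / M)) as [d Hd]. exists d.
  apply Rlt_div_l in Hd; [|lra].
  assert (H2d : 1 <= 2 ^ d) by (apply pow_R1_Rle; lra).
  assert (Hpd : 2 ^ d <= Rpower (2 ^ d) p).
  { rewrite <- (Rpower_1 (2 ^ d)) at 1 by lra. apply Rle_Rpower; lra. }
  assert (HTp : 0 < Rpower T p) by apply Rpower_pos.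
  rewrite Rpower_div by lra.
  apply Rle_lt_trans with (C * Rpower T p / 2 ^ d).
  - unfold Rdiv. rewrite Rmult_assoc. apply Rmult_le_compat_l; [lra|].
    apply Rmult_le_compat_l; [lra|]. apply Rinv_le_contravar; lra.
  - apply Rlt_div_l; lra.
Qed.

Lemma fold_Rmax_nonneg l : 0 <= fold_right Rmax 0 l.
Proof. induction l as [|y l IH]; simpl; [lra|]. eapply Rle_trans; [exact IH | apply Rmax_r]. Qed.

Lemma in_le_fold_Rmax x l : In x l -> x <= fold_right Rmax 0 l.
Proof.
  induction l as [|y l IH]; intros Hx; [destruct Hx|].
  destruct Hx as [<-|Hx]; simpl; [apply Rmax_l|].
  eapply Rle_trans; [exact (IH Hx) | apply Rmax_r].
Qed.

Lemma Rpower_INR_root p k : 0 < p -> (1 <= k)%nat -> Rpower (Rpower (INR k) (1 / p)) p = INR k.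
Proof.
  intros Hp Hk. rewrite Rpower_mult. replace (1 / p * p) with 1 by (field; lra).
  apply Rpower_1, lt_0_INR. lia.
Qed.

Lemma fold_Rmax_le l M : 0 <= M -> (forall x, In x l -> x <= M) -> fold_right Rmax 0 l <= M.
Proof.
  intros HM Hl. induction l as [|x l IH]; simpl; [exact HM|].
  apply Rmax_lub; [apply Hl; left; reflexivity | apply IH; intros y Hy; apply Hl; right; exact Hy].
Qed.


Section ConvexFunctions.

Variable g : R -> R.
Hypothesis g_convex : convex_on_nonneg g.

Lemma convex_chord a b c : 0 <= a -> a <= b -> b <= c -> a < c ->
  g b <= g a + (b - a) / (c - a) * (g c - g a).
Proof.
  intros Ha Hab Hbc Hac.
  set (t := (c - b) / (c - a)).
  assert (Ht : 0 <= t <= 1).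
  { unfold t; split.
    - apply Rmult_le_pos; [lra | left; apply Rinv_0_lt_compat; lra].
    - apply Rmult_le_reg_r with (c - a); [lra|]. field_simplify; lra. }
  assert (Hconv := g_convex a c t Ha ltac:(lra) Ht).
  replace (t * a + (1 - t) * c) with b in Hconv by (unfold t; field; lra).
  replace ((b - a) / (c - a)) with (1 - t) by (unfold t; field; lra).
  lra.
Qed.

Hypothesis g_zero : g 0 = 0.

Lemma convex0_scale x t : 0 <= x -> 0 <= t <= 1 -> g (t * x) <= t * g x.
Proof.
  intros Hx Ht. assert (Hconv := g_convex x 0 t Hx (Rle_refl 0) Ht).
  rewrite Rmult_0_r, Rplus_0_r, g_zero in Hconv. lra.
Qed.

Lemma convex0_superlinear x t : 0 <= x -> 1 <= t -> t * g x <= g (t * x).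
Proof.
  intros Hx Ht.
  assert (Hs := convex0_scale (t * x) (/ t) ltac:(nra)).
  rewrite <- Rmult_assoc, Rinv_l, Rmult_1_l in Hs by lra.
  assert (Hinv : 0 < / t <= 1).
  { split; [apply Rinv_0_lt_compat; lra|].
    rewrite <- Rinv_1. apply Rinv_le_contravar; lra. }
  specialize (Hs ltac:(lra)).
  apply Rmult_le_reg_l with (/ t); [lra|].
  rewrite <- Rmult_assoc, Rinv_l, Rmult_1_l by lra. exact Hs.
Qed.

Lemma convex0_superadditive x y : 0 <= x -> 0 <= y -> g x + g y <= g (x + y).
Proof.
  intros Hx Hy. destruct (Req_dec (x + y) 0) as [E|E].
  { replace x with 0 by lra. replace y with 0 by lra. rewrite Rplus_0_r, g_zero. lra. }
  assert (Hw : forall u, 0 <= u <= x + y -> 0 <= u / (x + y) <= 1).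
  { intros u Hu. split.
    - apply Rmult_le_pos; [lra | left; apply Rinv_0_lt_compat; lra].
    - apply Rmult_le_reg_r with (x + y); [lra|]. field_simplify; lra. }
  assert (Hgx := convex0_scale (x + y) (x / (x + y)) ltac:(lra) (Hw x ltac:(lra))).
  assert (Hgy := convex0_scale (x + y) (y / (x + y)) ltac:(lra) (Hw y ltac:(lra))).
  replace (x / (x + y) * (x + y)) with x in Hgx by (field; lra).
  replace (y / (x + y) * (x + y)) with y in Hgy by (field; lra).
  replace (g (x + y)) with (x / (x + y) * g (x + y) + y / (x + y) * g (x + y))
    by (field; lra).
  lra.
Qed.

Hypothesis g_nondecr : nondecr_on_nonneg g.

Section Sublevel.

Variables (y X : R).
Let E := fun x => 0 <= x <= X /\ g x <= y.

Lemma sublevel_lub_le b : 0 <= y -> is_lub E b -> 0 <= b -> g b <= y.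
Proof.
  intros Hy [Hub Hlub] Hb.
  destruct (Req_dec b 0) as [Hb0|Hb0]; [rewrite Hb0, g_zero; exact Hy|].
  assert (Hg2b : 0 <= g (2 * b)) by (rewrite <- g_zero; apply g_nondecr; lra).
  apply Rle_plus_epsilon. intros eps Heps.
  set (d := eps * b / (g (2 * b) + 1)).
  assert (Hd : 0 < d) by (unfold d; apply Rdiv_lt_0_compat; nra).
  destruct (classic (exists s, E s /\ b - d < s)) as [[s [[Hs Hgs] Hsb]] | Hno].
  - assert (Hsb' : s <= b) by (apply Hub; split; lra).
    destruct (Req_dec s b) as [<-|Hsb'']; [lra|].
    assert (Hch := convex_chord s b (2 * b) ltac:(lra) Hsb' ltac:(lra) ltac:(lra)).
    assert (Hgs0 : 0 <= g s) by (rewrite <- g_zero; apply g_nondecr; lra).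
    assert (Hgs2 : g s <= g (2 * b)) by (apply g_nondecr; lra).
    assert (Hfrac : (b - s) / (2 * b - s) <= d / b).
    { apply Rle_trans with ((b - s) / b).
      - apply Rmult_le_compat_l; [lra|]. apply Rinv_le_contravar; lra.
      - apply Rmult_le_compat_r; [left; apply Rinv_0_lt_compat; lra | lra]. }
    assert (Hdb : d / b * g (2 * b) <= eps).
    { unfold d. apply Rle_trans with (eps * (g (2 * b) / (g (2 * b) + 1))).
      - right. field. lra.
      - rewrite <- (Rmult_1_r eps) at 2. apply Rmult_le_compat_l; [lra|].
        apply Rmult_le_reg_r with (g (2 * b) + 1); [lra|]. field_simplify; lra. }
    assert ((b - s) / (2 * b - s) * (g (2 * b) - g s) <= d / b * g (2 * b)).
    { apply Rmult_le_compat; try lra.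
      apply Rmult_le_pos; [lra | left; apply Rinv_0_lt_compat; lra]. }
    lra.
  - assert (b <= b - d); [|lra].
    apply Hlub. intros x Hx. apply Rnot_lt_le. intros Hlt. apply Hno. eauto.
Qed.

Lemma sublevel_lub_ge b : y <= g X -> is_lub E b -> 0 <= b <= X -> y <= g b.
Proof.
  intros HyX [Hub _] Hb.
  destruct (Req_dec b X) as [->|HbX]; [exact HyX|].
  apply Rnot_lt_le. intros Hlt.
  set (D := g (b + 1) - g b).
  assert (HD : 0 <= D) by (unfold D; assert (g b <= g (b + 1)) by (apply g_nondecr; lra); lra).
  set (d := Rmin (Rmin 1 (X - b)) ((y - g b) / (D + 1))).
  assert (Hd0 : 0 < d).
  { unfold d. repeat apply Rmin_glb_lt; try lra. apply Rdiv_lt_0_compat; lra. }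
  assert (Hd1 : d <= 1 /\ d <= X - b).
  { assert (d <= Rmin 1 (X - b)) by apply Rmin_l.
    split; eapply Rle_trans; eauto; [apply Rmin_l | apply Rmin_r]. }
  assert (Hch := convex_chord b (b + d) (b + 1) ltac:(lra) ltac:(lra) ltac:(lra) ltac:(lra)).
  replace (b + d - b) with d in Hch by ring. replace (b + 1 - b) with 1 in Hch by ring.
  fold D in Hch. rewrite Rdiv_1_r in Hch.
  assert (HdD : d * D <= y - g b).
  { apply Rle_trans with ((y - g b) / (D + 1) * D).
    - apply Rmult_le_compat_r; [exact HD | apply Rmin_r].
    - apply Rmult_le_reg_r with (D + 1); [lra|]. field_simplify; nra. }
  assert (b + d <= b); [|lra].
  apply Hub. split; [lra|]. lra.
Qed.

End Sublevel.

(* The solution is the supremum [b] of a sublevel set; convexity gives the one-sided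
   continuity that rules out both [g b > y] and [g b < y]. *)
Lemma convex_nondecr_attains y X : 0 <= X -> 0 <= y -> y <= g X ->
  exists b, 0 <= b /\ g b = y.
Proof.
  intros HX Hy HyX.
  set (E := fun x => 0 <= x <= X /\ g x <= y).
  assert (HE0 : E 0) by (split; [lra | rewrite g_zero; lra]).
  destruct (completeness E) as [b Hb].
  { exists X. intros x [Hx _]. lra. }
  { exists 0. exact HE0. }
  assert (Hb0 : 0 <= b <= X).
  { destruct Hb as [Hub Hlub]. split; [apply Hub, HE0 | apply Hlub; intros x [Hx _]; lra]. }
  exists b. split; [lra|]. apply Rle_antisym.
  - apply (sublevel_lub_le y X); [exact Hy | exact Hb | lra].
  - apply (sublevel_lub_ge y X); [exact HyX | exact Hb | exact Hb0].
Qed.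

End ConvexFunctions.

Section PhiSequence.

Variable phi : nat -> R -> R.
Hypothesis Hphi : is_Phi_sequence phi.

Lemma phi_nondecr j : (1 <= j)%nat -> nondecr_on_nonneg (phi j).
Proof. intros Hj. apply (proj1 Hphi j Hj). Qed.

Lemma phi_convex j : (1 <= j)%nat -> convex_on_nonneg (phi j).
Proof. intros Hj. apply (proj1 Hphi j Hj). Qed.

Lemma phi_zero j : (1 <= j)%nat -> phi j 0 = 0.
Proof. intros Hj. apply (proj1 Hphi j Hj). Qed.

Lemma phi_nonneg j x : (1 <= j)%nat -> 0 <= x -> 0 <= phi j x.
Proof. intros Hj Hx. rewrite <- (phi_zero j Hj). apply phi_nondecr; [exact Hj | lra | lra]. Qed.

Lemma phi_antitone_index j j' x : (1 <= j)%nat -> (j <= j')%nat -> 0 <= x ->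
  phi j' x <= phi j x.
Proof.
  intros Hj Hjj' Hx. induction Hjj' as [|m Hm IH]; [lra|].
  destruct Hx as [Hx|<-].
  - destruct Hphi as [_ [Hdec _]]. specialize (Hdec m x ltac:(lia) Hx). lra.
  - rewrite (phi_zero (S m)), (phi_zero j) in * by lia. lra.
Qed.

Lemma PhiSum_zero n : PhiSum phi n 0 = 0.
Proof. induction n as [|n IH]; simpl; [lra|]. rewrite IH, phi_zero by lia. lra. Qed.

Lemma PhiSum_convex n : convex_on_nonneg (PhiSum phi n).
Proof.
  intros x y t Hx Hy Ht. induction n as [|n IH]; simpl; [lra|].
  assert (Hc := phi_convex (S n) ltac:(lia) x y t Hx Hy Ht). lra.
Qed.

Lemma PhiSum_nondecr n : nondecr_on_nonneg (PhiSum phi n).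
Proof.
  intros x y Hx Hxy. induction n as [|n IH]; simpl; [lra|].
  assert (phi (S n) x <= phi (S n) y) by (apply phi_nondecr; auto; lia). lra.
Qed.

Lemma PhiSum_nonneg n x : 0 <= x -> 0 <= PhiSum phi n x.
Proof. intros Hx. rewrite <- (PhiSum_zero n). apply PhiSum_nondecr; lra. Qed.

Lemma PhiSum_pos n x : (1 <= n)%nat -> 0 < x -> 0 < PhiSum phi n x.
Proof.
  intros Hn Hx. induction Hn as [|m Hm IH]; simpl.
  - destruct Hphi as [_ [_ [Hpos _]]]. specialize (Hpos x Hx). lra.
  - assert (0 <= phi (S m) x) by (apply phi_nonneg; [lia | lra]). lra.
Qed.

Lemma PhiSum_le_index k m x : (k <= m)%nat -> 0 <= x -> PhiSum phi k x <= PhiSum phi m x.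
Proof.
  intros Hkm Hx. induction Hkm as [|m Hm IH]; simpl; [lra|].
  assert (0 <= phi (S m) x) by (apply phi_nonneg; [lia | lra]). lra.
Qed.

Lemma PhiSum_ge_last k x : 0 <= x -> INR k * phi k x <= PhiSum phi k x.
Proof.
  intros Hx. destruct k as [|k]; [simpl; lra|].
  induction k as [|k IH]; [simpl; lra|].
  change (PhiSum phi (S (S k)) x) with (PhiSum phi (S k) x + phi (S (S k)) x).
  rewrite (S_INR (S k)).
  assert (phi (S (S k)) x <= phi (S k) x) by (apply phi_antitone_index; auto; lia).
  assert (0 <= INR (S k)) by apply pos_INR. nra.
Qed.

Lemma PhiSum_tail k m x : (1 <= k)%nat -> (k <= m)%nat -> 0 <= x ->
  PhiSum phi m x <= PhiSum phi k x + INR (m - k) * phi k x.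
Proof.
  intros Hk Hkm Hx. induction Hkm as [|m Hm IH].
  - rewrite Nat.sub_diag. simpl. lra.
  - replace (S m - k)%nat with (S (m - k)) by lia. rewrite S_INR. simpl.
    assert (phi (S m) x <= phi k x) by (apply phi_antitone_index; auto; lia). lra.
Qed.

Lemma PhiSum_index_concave k m x : (1 <= k)%nat -> (k <= m)%nat -> 0 <= x ->
  INR k * PhiSum phi m x <= INR m * PhiSum phi k x.
Proof.
  intros Hk Hkm Hx.
  assert (Htail := PhiSum_tail k m x Hk Hkm Hx).
  assert (Hlast := PhiSum_ge_last k x Hx).
  assert (Hm : INR m = INR k + INR (m - k)) by (rewrite <- plus_INR; f_equal; lia).
  assert (0 <= INR k) by apply pos_INR.
  assert (0 <= INR (m - k)) by apply pos_INR.
  assert (0 <= phi k x) by (apply phi_nonneg; auto).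
  rewrite Hm. nra.
Qed.

Lemma PhiSum_scale n x t : 0 <= x -> 0 <= t <= 1 -> PhiSum phi n (t * x) <= t * PhiSum phi n x.
Proof. apply convex0_scale; [apply PhiSum_convex | apply PhiSum_zero]. Qed.

Lemma PhiInv_spec k : (1 <= k)%nat ->
  0 < PhiInv phi k 1 /\ PhiSum phi k (PhiInv phi k 1) = 1.
Proof.
  intros Hk.
  assert (H1 := PhiSum_pos k 1 Hk ltac:(lra)).
  assert (Hex : exists b, 0 <= b /\ PhiSum phi k b = 1).
  { set (X := Rmax 1 (/ PhiSum phi k 1)).
    apply (convex_nondecr_attains (PhiSum phi k) (PhiSum_convex k) (PhiSum_zero k)
             (PhiSum_nondecr k) 1 X);
      [unfold X; apply Rle_trans with 1; [lra | apply Rmax_l] | lra |].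
    assert (Hsup := convex0_superlinear (PhiSum phi k) (PhiSum_convex k) (PhiSum_zero k)
                      1 X ltac:(lra) (Rmax_l _ _)).
    rewrite Rmult_1_r in Hsup. apply Rle_trans with (X * PhiSum phi k 1); [|exact Hsup].
    apply Rle_trans with (/ PhiSum phi k 1 * PhiSum phi k 1).
    - rewrite Rinv_l; lra.
    - apply Rmult_le_compat_r; [lra | apply Rmax_r]. }
  destruct (epsilon_spec (inhabits 0) _ Hex) as [Hb Heq]. fold (PhiInv phi k 1) in Hb, Heq.
  split; [|exact Heq].
  destruct Hb as [Hb|Hb]; [exact Hb|]. rewrite <- Hb, PhiSum_zero in Heq. lra.
Qed.

Lemma PhiSum_le_PhiInv k x V : (1 <= k)%nat -> 0 <= x -> 1 <= V ->
  PhiSum phi k x <= V -> x <= V * PhiInv phi k 1.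
Proof.
  intros Hk Hx HV Hle. destruct (PhiInv_spec k Hk) as [Hb Heq].
  set (b := PhiInv phi k 1) in *.
  apply Rnot_lt_le. intros Hlt.
  assert (Ht : 1 <= x / b).
  { apply Rmult_le_reg_r with b; [lra|]. field_simplify; nra. }
  assert (Hsup := convex0_superlinear (PhiSum phi k) (PhiSum_convex k) (PhiSum_zero k)
                    b (x / b) ltac:(lra) Ht).
  replace (x / b * b) with x in Hsup by (field; lra). rewrite Heq in Hsup.
  assert (V < x / b); [|lra].
  apply Rmult_lt_reg_r with b; [lra|]. field_simplify; lra.
Qed.

End PhiSequence.

Fixpoint phi_cost (phi : nat -> R -> R) (j0 : nat) (l : list R) : R :=
  match l with
  | nil => 0
  | x :: l' => phi j0 x + phi_cost phi (S j0) l'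
  end.

Definition pow_sum (p : R) (l : list R) : R := fold_right Rplus 0 (map (fun x => rpow x p) l).

Definition count_ge (s : R) (l : list R) : nat :=
  length (filter (fun x => if Rle_dec s x then true else false) l).

Definition nonincreasing (l : list R) : Prop := StronglySorted (fun x y => y <= x) l.

Definition nonneg_list (l : list R) : Prop := List.Forall (fun x => 0 <= x) l.

Lemma PhiVarSum_phi_cost phi f j0 I :
  PhiVarSum phi f j0 I = phi_cost phi j0 (map (fun ab => Rabs (incr f ab)) I).
Proof. revert j0. induction I as [|ab I IH]; intros j0; simpl; [reflexivity | now rewrite IH]. Qed.

Lemma phi_cost_snoc phi j0 l x :
  phi_cost phi j0 (l ++ x :: nil) = phi_cost phi j0 l + phi (j0 + length l)%nat x.
Proof.
  revert j0. induction l as [|y l IH]; intros j0; simpl; [rewrite Nat.add_0_r; lra|].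
  rewrite IH, Nat.add_succ_r. simpl. lra.
Qed.

Lemma PhiSum_phi_cost phi c x : PhiSum phi c x = phi_cost phi 1 (repeat x c).
Proof.
  assert (Hgen : forall j, PhiSum phi j x + phi_cost phi (S j) (repeat x c) = PhiSum phi (j + c) x).
  { induction c as [|c IH]; intros j; simpl; [rewrite Nat.add_0_r; lra|].
    rewrite Nat.add_succ_r, <- Nat.add_succ_l, <- (IH (S j)). simpl. lra. }
  specialize (Hgen O). simpl in Hgen. lra.
Qed.

Lemma count_ge_le_length s l : (count_ge s l <= length l)%nat.
Proof. apply filter_length_le. Qed.

Lemma count_ge_cons s x l :
  count_ge s (x :: l) = if Rle_dec s x then S (count_ge s l) else count_ge s l.
Proof. unfold count_ge. simpl. destruct (Rle_dec s x); reflexivity. Qed.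

Lemma count_ge_all_lt s l : (forall y, In y l -> y < s) -> count_ge s l = O.
Proof.
  induction l as [|y l IH]; intros Hl; [reflexivity|]. rewrite count_ge_cons.
  destruct (Rle_dec s y) as [Hy|_]; [specialize (Hl y (or_introl eq_refl)); lra|].
  apply IH. intros z Hz. apply Hl. right. exact Hz.
Qed.

Lemma count_ge_nonincreasing_lt s x l : nonincreasing (x :: l) -> x < s -> count_ge s (x :: l) = O.
Proof.
  intros Hl Hx. apply count_ge_all_lt. intros y [<-|Hy]; [exact Hx|].
  apply StronglySorted_inv, proj2 in Hl. rewrite Forall_forall in Hl.
  specialize (Hl y Hy). lra.
Qed.

Lemma pow_sum_nonneg p l : 0 <= pow_sum p l.
Proof.
  induction l as [|x l IH]; unfold pow_sum in *; simpl; [lra|].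
  assert (0 <= rpow x p) by apply rpow_nonneg. lra.
Qed.

Lemma pow_sum_perm p l l' : Permutation l l' -> pow_sum p l = pow_sum p l'.
Proof. intros HP. unfold pow_sum. induction HP; simpl; lra. Qed.

Lemma pow_sum_scale p c l : 0 <= c -> nonneg_list l ->
  pow_sum p (map (fun x => c * x) l) = rpow c p * pow_sum p l.
Proof.
  intros Hc Hl. induction Hl as [|x l Hx Hl IH]; unfold pow_sum in *; simpl; [ring|].
  rewrite IH, rpow_mult by assumption. ring.
Qed.

Lemma pow_sum_const {A : Type} p c (l : list A) :
  pow_sum p (map (fun _ => c) l) = INR (length l) * rpow c p.
Proof.
  induction l as [|x l IH]; unfold pow_sum in *; simpl; [ring|].
  rewrite IH. destruct (length l); simpl; ring.
Qed.

Lemma pow_sum_le_length p T l : 0 < p -> (forall x, In x l -> 0 <= x <= T) ->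
  pow_sum p l <= INR (length l) * rpow T p.
Proof.
  intros Hp Hl. induction l as [|x l IH]; unfold pow_sum in *; cbn [map fold_right length];
    [simpl; lra|].
  rewrite S_INR.
  assert (rpow x p <= rpow T p) by (destruct (Hl x (or_introl eq_refl)); apply rpow_le; auto).
  assert (IHl := IH (fun y Hy => Hl y (or_intror Hy))). lra.
Qed.

Lemma pow_sum_truncate_half p T l : 0 < p -> 0 < T -> nonneg_list l ->
  pow_sum p (map (Rmin T) l) <=
  pow_sum p (map (Rmin (T / 2)) l) + INR (count_ge (T / 2) l) * rpow T p.
Proof.
  intros Hp HT Hl. induction Hl as [|x l Hx Hl IH]; unfold pow_sum in *; cbn [map fold_right];
    [simpl; lra|].
  rewrite count_ge_cons. destruct (Rle_dec (T / 2) x) as [Hle|Hlt].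
  - rewrite S_INR.
    assert (rpow (Rmin T x) p <= rpow T p).
    { apply rpow_le; [lra | apply Rmin_glb; lra | apply Rmin_l]. }
    assert (0 <= rpow (Rmin (T / 2) x) p) by apply rpow_nonneg. lra.
  - rewrite (Rmin_right T x), (Rmin_right (T / 2) x) by lra. lra.
Qed.

Section PhiCost.

Variable phi : nat -> R -> R.
Hypothesis Hphi : is_Phi_sequence phi.

Lemma phi_cost_nonneg j0 l : (1 <= j0)%nat -> nonneg_list l -> 0 <= phi_cost phi j0 l.
Proof.
  intros Hj Hl. revert j0 Hj. induction Hl as [|x l Hx Hl IH]; intros j0 Hj; simpl; [lra|].
  assert (0 <= phi j0 x) by (apply phi_nonneg; auto).
  assert (0 <= phi_cost phi (S j0) l) by (apply IH; lia). lra.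
Qed.

Lemma phi_cost_le_map (f g : R -> R) j0 l : (1 <= j0)%nat ->
  (forall x, In x l -> 0 <= f x <= g x) ->
  phi_cost phi j0 (map f l) <= phi_cost phi j0 (map g l).
Proof.
  revert j0. induction l as [|x l IH]; intros j0 Hj Hfg; simpl; [lra|].
  assert (phi j0 (f x) <= phi j0 (g x)).
  { destruct (Hfg x (or_introl eq_refl)). apply phi_nondecr; auto. }
  assert (phi_cost phi (S j0) (map f l) <= phi_cost phi (S j0) (map g l)).
  { apply IH; [lia | intros y Hy; apply Hfg; right; exact Hy]. }
  lra.
Qed.

Lemma phi_cost_scale t j0 l : (1 <= j0)%nat -> 0 <= t <= 1 -> nonneg_list l ->
  phi_cost phi j0 (map (fun x => t * x) l) <= t * phi_cost phi j0 l.
Proof.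
  intros Hj Ht Hl. revert j0 Hj. induction Hl as [|x l Hx Hl IH]; intros j0 Hj; simpl; [lra|].
  assert (phi j0 (t * x) <= t * phi j0 x).
  { apply convex0_scale; auto; [apply phi_convex | apply phi_zero]; assumption. }
  assert (phi_cost phi (S j0) (map (fun x => t * x) l) <= t * phi_cost phi (S j0) l)
    by (apply IH; lia).
  lra.
Qed.

(* In a nonincreasing list the entries [>= s] come first, at the indices [j0, j0 + 1, ...]. *)
Lemma phi_cost_count_ge s j0 l : (1 <= j0)%nat -> 0 <= s -> nonincreasing l -> nonneg_list l ->
  phi_cost phi j0 (repeat s (count_ge s l)) <= phi_cost phi j0 l.
Proof.
  intros Hj Hs Hl Hnn. revert j0 Hj. induction Hl as [|x l Hl IH Hx]; intros j0 Hj; [simpl; lra|].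
  inversion Hnn as [|? ? Hx0 Hnn']; subst.
  destruct (Rle_dec s x) as [Hsx|Hsx].
  - rewrite count_ge_cons. destruct (Rle_dec s x); [|contradiction]. simpl.
    assert (phi j0 s <= phi j0 x) by (apply phi_nondecr; auto).
    assert (phi_cost phi (S j0) (repeat s (count_ge s l)) <= phi_cost phi (S j0) l)
      by (apply IH; auto; lia).
    lra.
  - rewrite count_ge_nonincreasing_lt by (try constructor; auto; lra).
    simpl. apply (phi_cost_nonneg j0 (x :: l) Hj Hnn).
Qed.

(* By superadditivity, each entry [>= T] saves [phi_j(T) - phi_j(T/2) >= phi_j(T/2)]. *)
Lemma phi_cost_truncate_half T j0 l : (1 <= j0)%nat -> 0 < T -> nonincreasing l -> nonneg_list l ->
  phi_cost phi j0 (map (Rmin (T / 2)) l) + phi_cost phi j0 (repeat (T / 2) (count_ge T l))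
  <= phi_cost phi j0 (map (Rmin T) l).
Proof.
  intros Hj HT Hl Hnn. revert j0 Hj. induction Hl as [|x l Hl IH Hx]; intros j0 Hj; [simpl; lra|].
  inversion Hnn as [|? ? Hx0 Hnn']; subst.
  destruct (Rle_dec T x) as [HTx|HTx].
  - rewrite count_ge_cons. destruct (Rle_dec T x); [|contradiction]. simpl.
    rewrite (Rmin_left T x), (Rmin_left (T / 2) x) by lra.
    assert (phi j0 (T / 2) + phi j0 (T / 2) <= phi j0 T).
    { replace T with (T / 2 + T / 2) at 3 by field.
      apply convex0_superadditive; [apply phi_convex | apply phi_zero | lra | lra]; assumption. }
    assert (IHl := IH Hnn' (S j0) ltac:(lia)). lra.
  - rewrite count_ge_nonincreasing_lt by (try constructor; auto; lra).
    cbn [repeat phi_cost]. rewrite Rplus_0_r. apply (phi_cost_le_map _ _ j0 (x :: l) Hj).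
    intros y Hy. unfold nonneg_list in Hnn. rewrite Forall_forall in Hnn. specialize (Hnn y Hy).
    split; [apply Rmin_glb; lra|].
    unfold Rmin. destruct (Rle_dec (T / 2) y), (Rle_dec T y); lra.
Qed.

End PhiCost.
Section DyadicLevels.

Variable phi : nat -> R -> R.
Hypothesis Hphi : is_Phi_sequence phi.
Variables (p K : R) (n : nat).
Hypothesis Hp : 1 <= p.
Hypothesis HK : 0 < K.
Hypothesis HKbound : forall k, (1 <= k <= n)%nat -> Rpower (INR k) (1 / p) * PhiInv phi k 1 <= K.

Lemma level_count_bound N T : (N <= n)%nat -> 0 < T -> PhiSum phi N T <= 1 ->
  INR N * Rpower T p <= Rpower K p.
Proof.
  intros HNn HT HPhi. destruct N as [|N]; [simpl; rewrite Rmult_0_l; left; apply Rpower_pos|].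
  assert (HTb := PhiSum_le_PhiInv phi Hphi (S N) T 1 ltac:(lia) ltac:(lra) ltac:(lra) HPhi).
  assert (HKN := HKbound (S N) ltac:(lia)).
  set (q := Rpower (INR (S N)) (1 / p)) in *.
  assert (Hq : 0 < q) by apply Rpower_pos.
  rewrite <- (Rpower_INR_root p (S N)) by (lra || lia). fold q.
  rewrite Rpower_mult_distr by lra.
  apply Rle_Rpower_l; [lra|]. split; [nra|]. nra.
Qed.

(* Take [m = ceil (K^p / T^p)]: then [Phi_m(T) >= 1] by the hypothesis on [K], and the
   concavity of [Phi] in its index transfers this to [Phi_N]. *)
Lemma level_lower_bound N T : (N <= n)%nat -> 0 < T ->
  INR N * Rpower T p <= Rpower K p -> Rpower K p <= INR n * Rpower T p ->
  INR N * Rpower T p <= 2 * Rpower K p * PhiSum phi N T.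
Proof.
  intros HNn HT Hlow Hhigh.
  destruct N as [|N]; [simpl; lra|].
  assert (HTp : 0 < Rpower T p) by apply Rpower_pos.
  set (r := Rpower K p / Rpower T p).
  assert (HKr : Rpower K p = r * Rpower T p) by (unfold r; field; lra).
  rewrite HKr in Hlow, Hhigh |- *.
  assert (HNr : INR (S N) <= r) by (apply Rmult_le_reg_r with (Rpower T p); lra).
  assert (Hrn : r <= INR n) by (apply Rmult_le_reg_r with (Rpower T p); lra).
  assert (HN1 : 1 <= INR (S N)) by (rewrite S_INR; assert (0 <= INR N) by apply pos_INR; lra).
  destruct (ceil_nat r ltac:(lra)) as [m [Hm1 Hm2]].
  assert (HNm : (S N <= m)%nat) by (apply INR_le; lra).
  assert (Hmn : (m <= n)%nat) by (apply Nat.lt_succ_r, INR_lt; rewrite S_INR; lra).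
  destruct (PhiInv_spec phi Hphi m ltac:(lia)) as [Hbpos Hbeq].
  assert (Hbm := HKbound m ltac:(lia)).
  set (q := Rpower (INR m) (1 / p)) in *.
  assert (Hq : 0 < q) by apply Rpower_pos.
  assert (HKq : K <= q * T).
  { apply Rnot_lt_le. intros Hlt.
    assert (Rpower (q * T) p < Rpower K p) by (apply Rlt_Rpower_l; [lra | nra]).
    rewrite <- Rpower_mult_distr in H by lra. unfold q in H.
    rewrite Rpower_INR_root in H by (lra || lia).
    rewrite HKr in H. nra. }
  assert (HPm : 1 <= PhiSum phi m T).
  { rewrite <- Hbeq. apply PhiSum_nondecr; [exact Hphi | lra | nra]. }
  assert (Hconc := PhiSum_index_concave phi Hphi (S N) m T ltac:(lia) HNm ltac:(lra)).
  assert (HPN : 0 <= PhiSum phi (S N) T) by (apply PhiSum_nonneg; [exact Hphi | lra]).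
  assert (INR (S N) <= 2 * r * PhiSum phi (S N) T) by nra.
  nra.
Qed.

Variable a : list R.
Hypothesis Ha_length : length a = n.
Hypothesis Ha_sorted : nonincreasing a.
Hypothesis Ha_nonneg : nonneg_list a.
Hypothesis Ha_cost : phi_cost phi 1 a <= 1.

Let trunc_pow T := pow_sum p (map (Rmin T) a).
Let trunc_cost T := phi_cost phi 1 (map (Rmin T) a).

Lemma trunc_cost_bounds T : 0 < T -> 0 <= trunc_cost T <= 1.
Proof.
  intros HT. unfold trunc_cost. unfold nonneg_list in Ha_nonneg. rewrite Forall_forall in Ha_nonneg.
  assert (Hmin : forall x, In x a -> 0 <= Rmin T x <= x).
  { intros x Hx. specialize (Ha_nonneg x Hx). split; [apply Rmin_glb|apply Rmin_r]; lra. }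
  split.
  - apply phi_cost_nonneg; [exact Hphi | lia|]. apply Forall_forall. intros y Hy.
    apply in_map_iff in Hy. destruct Hy as [x [<- Hx]]. apply Hmin, Hx.
  - eapply Rle_trans; [|exact Ha_cost]. rewrite <- (map_id a) at 2.
    apply phi_cost_le_map; [exact Hphi | lia | exact Hmin].
Qed.

Lemma count_ge_level_bound T : 0 < T -> INR (count_ge T a) * Rpower T p <= Rpower K p.
Proof.
  intros HT. apply level_count_bound; [|exact HT|].
  - rewrite <- Ha_length. apply count_ge_le_length.
  - rewrite PhiSum_phi_cost. eapply Rle_trans; [|exact Ha_cost].
    apply phi_cost_count_ge; auto; lra.
Qed.

Lemma trunc_pow_small_level T : 0 < T -> INR n * Rpower (T / 4) p < Rpower K p ->
  trunc_pow T <= Rpower 4 p * Rpower K p.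
Proof.
  intros HT Hsmall. rewrite Rpower_div in Hsmall by lra.
  assert (H4 : 0 < Rpower 4 p) by apply Rpower_pos.
  apply Rle_trans with (INR n * Rpower T p).
  - unfold trunc_pow. rewrite <- rpow_pos_eq, <- Ha_length, <- (length_map (Rmin T)) by exact HT.
    apply pow_sum_le_length; [lra|]. intros y Hy. apply in_map_iff in Hy.
    destruct Hy as [x [<- Hx]]. unfold nonneg_list in Ha_nonneg. rewrite Forall_forall in Ha_nonneg.
    specialize (Ha_nonneg x Hx). split; [apply Rmin_glb|apply Rmin_l]; lra.
  - replace (INR n * Rpower T p) with (Rpower 4 p * (INR n * (Rpower T p / Rpower 4 p)))
      by (field; lra).
    apply Rmult_le_compat_l; lra.
Qed.

Lemma trunc_pow_step T : 0 < T -> Rpower K p <= INR n * Rpower (T / 4) p ->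
  trunc_pow T <= trunc_pow (T / 2)
    + 2 * Rpower 4 p * Rpower K p * (trunc_cost (T / 2) - trunc_cost (T / 4)).
Proof.
  intros HT Hlarge.
  set (N := count_ge (T / 2) a).
  assert (Hpow := pow_sum_truncate_half p T a ltac:(lra) HT Ha_nonneg). fold N in Hpow.
  assert (Hcost := phi_cost_truncate_half phi Hphi (T / 2) 1 a ltac:(lia) ltac:(lra)
                     Ha_sorted Ha_nonneg).
  replace (T / 2 / 2) with (T / 4) in Hcost by field.
  rewrite <- PhiSum_phi_cost in Hcost.
  assert (HN2 := count_ge_level_bound (T / 2) ltac:(lra)). fold N in HN2.
  assert (H42 : Rpower (T / 4) p <= Rpower (T / 2) p) by (apply Rle_Rpower_l; lra).
  assert (HN : (N <= n)%nat) by (rewrite <- Ha_length; apply count_ge_le_length).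
  assert (HN0 : 0 <= INR N) by apply pos_INR.
  assert (Hlow := level_lower_bound N (T / 4) HN ltac:(lra) ltac:(nra) Hlarge).
  assert (HT4 : Rpower T p = Rpower 4 p * Rpower (T / 4) p).
  { rewrite Rpower_div by lra. field. apply Rgt_not_eq, Rpower_pos. }
  assert (H4 : 0 < Rpower 4 p) by apply Rpower_pos.
  rewrite rpow_pos_eq, HT4 in Hpow by exact HT.
  fold (trunc_pow T) (trunc_pow (T / 2)) in Hpow.
  fold (trunc_cost (T / 2)) (trunc_cost (T / 4)) in Hcost.
  fold N in Hcost.
  assert (HKp : 0 <= Rpower K p) by (left; apply Rpower_pos).
  assert (2 * Rpower 4 p * Rpower K p * PhiSum phi N (T / 4)
          <= 2 * Rpower 4 p * Rpower K p * (trunc_cost (T / 2) - trunc_cost (T / 4)))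
    by (apply Rmult_le_compat_l; [nra | lra]).
  assert (INR N * (Rpower 4 p * Rpower (T / 4) p)
          <= Rpower 4 p * (2 * Rpower K p * PhiSum phi N (T / 4))).
  { replace (INR N * (Rpower 4 p * Rpower (T / 4) p))
      with (Rpower 4 p * (INR N * Rpower (T / 4) p)) by ring.
    apply Rmult_le_compat_l; lra. }
  lra.
Qed.

Lemma trunc_pow_bound d : forall T, 0 < T -> INR n * Rpower (T / 2 ^ d) p < Rpower K p ->
  trunc_pow T <= Rpower 4 p * Rpower K p * (1 + 2 * trunc_cost (T / 2)).
Proof.
  assert (HKp : 0 < Rpower 4 p * Rpower K p) by (apply Rmult_lt_0_compat; apply Rpower_pos).
  induction d as [|d IH]; intros T HT Hsmall.
  - assert (trunc_pow T <= Rpower 4 p * Rpower K p);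
      [|destruct (trunc_cost_bounds (T / 2) ltac:(lra)); nra].
    apply trunc_pow_small_level; [exact HT|]. eapply Rle_lt_trans; [|exact Hsmall].
    apply Rmult_le_compat_l; [apply pos_INR|]. apply Rle_Rpower_l; simpl; lra.
  - destruct (Rlt_or_le (INR n * Rpower (T / 4) p) (Rpower K p)) as [Hlt|Hge].
    + assert (trunc_pow T <= Rpower 4 p * Rpower K p) by (apply trunc_pow_small_level; auto).
      destruct (trunc_cost_bounds (T / 2) ltac:(lra)); nra.
    + assert (Hstep := trunc_pow_step T HT Hge).
      assert (Hrec := IH (T / 2) ltac:(lra)).
      replace (T / 2 / 2 ^ d) with (T / 2 ^ S d) in Hrec by (simpl; field; apply pow_nonzero; lra).
      specialize (Hrec Hsmall). replace (T / 2 / 2) with (T / 4) in Hrec by field.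
      nra.
Qed.

Lemma pow_sum_le_of_phi_cost : pow_sum p a <= 3 * Rpower 4 p * Rpower K p.
Proof.
  set (T0 := 1 + fold_right Rmax 0 a).
  assert (HT0 : 0 < T0) by (unfold T0; assert (H := fold_Rmax_nonneg a); lra).
  assert (Htop : trunc_pow T0 = pow_sum p a).
  { unfold trunc_pow. f_equal. rewrite <- (map_id a) at 2. apply map_ext_in.
    intros x Hx. apply Rmin_right. assert (H := in_le_fold_Rmax x a Hx). unfold T0. lra. }
  assert (HKp : 0 < Rpower K p) by apply Rpower_pos.
  destruct (dyadic_Rpower_small p T0 (INR n) (Rpower K p) Hp HT0 (pos_INR n) HKp) as [d Hd].
  rewrite <- Htop. eapply Rle_trans; [exact (trunc_pow_bound d T0 HT0 Hd)|].
  destruct (trunc_cost_bounds (T0 / 2)) as [_ Hc]; [lra|].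
  assert (0 < Rpower 4 p * Rpower K p) by (apply Rmult_lt_0_compat; apply Rpower_pos). nra.
Qed.

End DyadicLevels.

Module RDecreasing <: TotalLeBool.
  Definition t := R.
  Definition leb (x y : R) : bool := if Rle_dec y x then true else false.
  Lemma leb_total x y : leb x y = true \/ leb y x = true.
  Proof. unfold leb. destruct (Rle_dec y x), (Rle_dec x y); auto. lra. Qed.
End RDecreasing.

Module RSortDecreasing := Sort RDecreasing.

Lemma exists_nonincreasing_perm (l : list R) : exists l', Permutation l l' /\ nonincreasing l'.
Proof.
  exists (RSortDecreasing.sort l). split; [apply RSortDecreasing.Permuted_sort|].
  assert (Hs := RSortDecreasing.StronglySorted_sort l).
  unfold RDecreasing.leb in Hs.
  assert (Htrans : Relations_1.Transitive
                     (fun x y : R => is_true (if Rle_dec y x then true else false))).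
  { intros x y z. destruct (Rle_dec y x), (Rle_dec z y), (Rle_dec z x); auto; lra. }
  specialize (Hs Htrans).
  induction Hs as [|x l' _ IH Hx]; constructor; [exact IH|].
  eapply Forall_impl; [|exact Hx]. intros y Hy. unfold is_true in Hy.
  destruct (Rle_dec y x); [assumption | discriminate].
Qed.

Lemma nonoverlapping_perm I J : nonoverlapping I -> Permutation I J -> nonoverlapping J.
Proof.
  intros [HF HP] HIJ. split.
  - rewrite Forall_forall in *. intros x Hx. apply HF, Permutation_in with J; [|exact Hx].
    apply Permutation_sym, HIJ.
  - apply (Permutation_nth I J (0, 0)) in HIJ. destruct HIJ as [Hlen [f [Hbf [Hinj Hnth]]]].
    intros i j Hi Hj Hij. rewrite Hlen in Hi, Hj. rewrite !Hnth by assumption.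
    apply HP; auto.
Qed.

Lemma nonoverlapping_sorted_perm f I : nonoverlapping I ->
  exists J, Permutation I J /\ nonoverlapping J /\
            nonincreasing (map (fun ab => Rabs (incr f ab)) J).
Proof.
  intros HI. destruct (exists_nonincreasing_perm (map (fun ab => Rabs (incr f ab)) I))
    as [a [Ha Hsorted]].
  destruct (Permutation_map_inv _ _ (Permutation_sym Ha)) as [J [-> HIJ]].
  exists J. split; [exact HIJ|].
  split; [apply nonoverlapping_perm with I; assumption | exact Hsorted].
Qed.

Lemma incr_scale c f ab : incr (fun x => c * f x) ab = c * incr f ab.
Proof. unfold incr. ring. Qed.

Lemma pSum_pow_sum p f I :
  pSum p f I = rpow (pow_sum p (map (fun ab => Rabs (incr f ab)) I)) (1 / p).
Proof. unfold pSum, pow_sum. rewrite map_map. reflexivity. Qed.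

Lemma nonneg_list_abs f I : nonneg_list (map (fun ab => Rabs (incr f ab)) I).
Proof.
  apply Forall_forall. intros y Hy. apply in_map_iff in Hy.
  destruct Hy as [ab [<- _]]. apply Rabs_pos.
Qed.

Lemma pSum_scale p c f I : 0 < p -> 0 < c -> pSum p (fun x => c * f x) I = c * pSum p f I.
Proof.
  intros Hp Hc. rewrite !pSum_pow_sum.
  replace (map (fun ab => Rabs (incr (fun x => c * f x) ab)) I)
    with (map (fun x => c * x) (map (fun ab => Rabs (incr f ab)) I)).
  2: { rewrite map_map. apply map_ext. intros ab.
       rewrite incr_scale, Rabs_mult, (Rabs_right c) by lra. reflexivity. }
  rewrite pow_sum_scale by (lra || apply nonneg_list_abs).
  rewrite rpow_mult, rpow_inv by (try apply rpow_nonneg; try apply pow_sum_nonneg; lra).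
  reflexivity.
Qed.

Lemma maxterm_ge phi p n k : (1 <= k <= n)%nat ->
  Rpower (INR k) (1 / p) * PhiInv phi k 1 <= maxterm phi p n.
Proof.
  intros Hk. apply in_le_fold_Rmax, in_map_iff. exists k. split; [reflexivity|].
  apply in_seq. lia.
Qed.

Section Sufficiency.

Variable phi : nat -> R -> R.
Hypothesis Hphi : is_Phi_sequence phi.

Definition PhiVar_le1 (g : R -> R) : Prop :=
  forall I, nonoverlapping I -> PhiVarSum phi g 1 I <= 1.

Lemma PhiBV_normalized f : PhiBV phi f -> exists c, 0 < c /\ PhiVar_le1 (fun x => c * f x).
Proof.
  intros [c0 [Hc0 [M0 HM0]]].
  set (V := Rmax 1 M0).
  assert (HV1 : 1 <= V) by apply Rmax_l.
  exists (c0 / V). split; [apply Rdiv_lt_0_compat; lra|]. intros I HI.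
  rewrite PhiVarSum_phi_cost.
  replace (map (fun ab => Rabs (incr (fun x => c0 / V * f x) ab)) I)
    with (map (fun x => / V * x) (map (fun ab => Rabs (incr (fun x => c0 * f x) ab)) I)).
  2: { rewrite map_map. apply map_ext. intros ab. rewrite !incr_scale, !Rabs_mult.
       assert (0 < c0 / V) by (apply Rdiv_lt_0_compat; lra).
       rewrite (Rabs_right (c0 / V)), (Rabs_right c0) by lra.
       unfold Rdiv. ring. }
  assert (HinvV : 0 <= / V <= 1).
  { split; [left; apply Rinv_0_lt_compat; lra|]. rewrite <- Rinv_1. apply Rinv_le_contravar; lra. }
  eapply Rle_trans;
    [apply phi_cost_scale; [exact Hphi | lia | exact HinvV | apply nonneg_list_abs]|].
  rewrite <- PhiVarSum_phi_cost.
  apply Rle_trans with (/ V * V); [apply Rmult_le_compat_l; [lra|] |].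
  - apply Rle_trans with M0; [apply HM0, HI | apply Rmax_r].
  - rewrite Rinv_l by lra. lra.
Qed.

Lemma PhiVar_le1_oscillation g x : PhiVar_le1 g -> 0 <= x <= 1 ->
  Rabs (g x - g 0) <= PhiInv phi 1 1.
Proof.
  intros Hg Hx.
  assert (HI : nonoverlapping ((0, x) :: nil)).
  { split; [constructor; [unfold interval_in01; simpl; lra | constructor]|].
    intros i j Hi Hj Hij. simpl in Hi, Hj. lia. }
  specialize (Hg _ HI). simpl in Hg. unfold incr in Hg. simpl in Hg.
  rewrite <- (Rmult_1_l (PhiInv phi 1 1)).
  apply PhiSum_le_PhiInv; [exact Hphi | lia | apply Rabs_pos | lra | simpl; lra].
Qed.

Lemma PhiVar_le1_pSum_le g p K n I : PhiVar_le1 g -> 1 <= p -> 0 < K ->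
  (forall k, (1 <= k <= n)%nat -> Rpower (INR k) (1 / p) * PhiInv phi k 1 <= K) ->
  nonoverlapping I -> length I = n ->
  pSum p g I <= rpow (3 * Rpower 4 p) (1 / p) * K.
Proof.
  intros Hg Hp HK HKbound HI Hlen.
  destruct (nonoverlapping_sorted_perm g I HI) as [J [HIJ [HJ Hsorted]]].
  set (a := map (fun ab => Rabs (incr g ab)) J) in *.
  assert (Hcore : pow_sum p a <= 3 * Rpower 4 p * Rpower K p).
  { apply (pow_sum_le_of_phi_cost phi Hphi p K n); auto.
    - unfold a. rewrite length_map, <- (Permutation_length HIJ). exact Hlen.
    - apply nonneg_list_abs.
    - unfold a. rewrite <- PhiVarSum_phi_cost. apply Hg, HJ. }
  rewrite pSum_pow_sum, (pow_sum_perm p _ a) by (apply Permutation_map, HIJ).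
  assert (H4 : 0 < Rpower 4 p) by apply Rpower_pos.
  assert (HKp : 0 < Rpower K p) by apply Rpower_pos.
  apply Rle_trans with (rpow (3 * Rpower 4 p * Rpower K p) (1 / p)).
  - apply rpow_le; [apply Rdiv_lt_0_compat; lra | apply pow_sum_nonneg | exact Hcore].
  - rewrite rpow_mult, <- (rpow_pos_eq K p), rpow_inv by lra. lra.
Qed.

Lemma sufficiency nu p : modulus_of_variation nu -> 1 <= p ->
  (exists B, forall n, (1 <= n)%nat -> maxterm phi p n <= B * nu n) ->
  forall f, PhiBV phi f -> Vp p nu f.
Proof.
  intros [Hnu_pos _] Hp [B HB] f Hf.
  destruct (PhiBV_normalized f Hf) as [c [Hc Hg]].
  split.
  - exists (Rabs (f 0) + PhiInv phi 1 1 / c). intros x Hx.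
    assert (Hosc := PhiVar_le1_oscillation _ x Hg Hx). cbv beta in Hosc.
    replace (c * f x - c * f 0) with (c * (f x - f 0)) in Hosc by ring.
    rewrite Rabs_mult, Rabs_right in Hosc by lra.
    assert (Rabs (f x - f 0) <= PhiInv phi 1 1 / c).
    { apply Rmult_le_reg_l with c; [lra|]. unfold Rdiv.
      rewrite (Rmult_comm (PhiInv phi 1 1)), <- Rmult_assoc, Rinv_r by lra. lra. }
    assert (Htri := Rabs_triang (f x - f 0) (f 0)).
    replace (f x - f 0 + f 0) with (f x) in Htri by ring.
    lra.
  - set (B1 := Rmax B 1).
    assert (HB1 : 1 <= B1) by apply Rmax_r.
    exists (rpow (3 * Rpower 4 p) (1 / p) * B1 / c). intros n Hn I HI Hlen.
    assert (Hnu := Hnu_pos n Hn).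
    assert (HpS := PhiVar_le1_pSum_le _ p (B1 * nu n) n I Hg Hp ltac:(nra)).
    rewrite pSum_scale in HpS by lra.
    specialize (HpS ltac:(intros k Hk; eapply Rle_trans; [apply maxterm_ge, Hk|];
                          eapply Rle_trans; [apply HB, Hn|];
                          apply Rmult_le_compat_r; [lra | apply Rmax_l]) HI Hlen).
    apply Rmult_le_reg_r with (c * nu n); [nra|].
    replace (pSum p f I / nu n * (c * nu n)) with (c * pSum p f I) by (field; lra).
    replace (rpow (3 * Rpower 4 p) (1 / p) * B1 / c * (c * nu n))
      with (rpow (3 * Rpower 4 p) (1 / p) * (B1 * nu n)) by (field; lra).
    exact HpS.
Qed.

End Sufficiency.

Lemma sum_f_R0_indicator i0 d B : (i0 <= B)%nat ->
  sum_f_R0 (fun i => if Nat.eqb i i0 then d else 0) B = d.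
Proof.
  intros Hi0. induction B as [|B IH].
  - replace i0 with O by lia. reflexivity.
  - rewrite tech5. destruct (Nat.eq_dec i0 (S B)) as [->|Hne].
    + rewrite Nat.eqb_refl, (sum_eq _ (fun _ => 0)), sum_cte; [lra|].
      intros i Hi. destruct (Nat.eqb_spec i (S B)); [lia | reflexivity].
    + rewrite IH by lia. destruct (Nat.eqb_spec (S B) i0); [lia | lra].
Qed.

Lemma map_nth_seq {A : Type} (l : list A) d : map (fun t => nth t l d) (seq 0 (length l)) = l.
Proof.
  induction l as [|x l IH]; [reflexivity|].
  simpl. rewrite <- seq_shift, map_map. f_equal. exact IH.
Qed.

Section BlockBound.

Variable phi : nat -> R -> R.
Hypothesis Hphi : is_Phi_sequence phi.
Variables (A : Type) (v : A -> R) (block : A -> option nat) (h : nat -> R).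

Definition in_block (i : nat) (x : A) : bool :=
  match block x with Some j => Nat.eqb j i | None => false end.

Lemma block_bound_exists l : exists B, forall x i, In x l -> block x = Some i -> (i <= B)%nat.
Proof.
  induction l as [|x l [B HB]]; [exists O; intros ? ? []|].
  exists (Nat.max B (match block x with Some j => j | None => O end)).
  intros y i [<-|Hy] Hb; [rewrite Hb; lia|]. specialize (HB y i Hy Hb). lia.
Qed.

(* Within block [i], the [c]-th item in the list has index at least [c], so its weight is
   at most [phi_c]: the items of block [i] cost at most [Phi_(count of block i)(h i)]. *)
Lemma phi_cost_le_block_sum l B :
  (forall x, In x l -> block x = None -> v x = 0) ->
  (forall x i, In x l -> block x = Some i -> 0 <= v x <= h i /\ (i <= B)%nat) ->
  phi_cost phi 1 (map v l)
  <= sum_f_R0 (fun i => PhiSum phi (length (filter (in_block i) l)) (h i)) B.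
Proof.
  induction l as [|x l IH] using rev_ind; intros Hnone Hsome.
  - apply cond_pos_sum. intros i. simpl. lra.
  - assert (IHl := IH (fun y Hy => Hnone y (in_or_app _ _ _ (or_introl Hy)))
                      (fun y i Hy => Hsome y i (in_or_app _ _ _ (or_introl Hy)))).
    assert (Hx : In x (l ++ x :: nil)) by (apply in_or_app; right; left; reflexivity).
    rewrite map_app. simpl (map v (x :: nil)). rewrite phi_cost_snoc, length_map.
    assert (Hcount : forall i, length (filter (in_block i) (l ++ x :: nil)) =
              (length (filter (in_block i) l) + if in_block i x then 1 else 0)%nat).
    { intros i. rewrite filter_app, length_app. simpl. destruct (in_block i x); reflexivity. }
    destruct (block x) as [i0|] eqn:Hbx.
    + destruct (Hsome x i0 Hx Hbx) as [[Hv0 Hvh] Hi0].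
      set (c := length (filter (in_block i0) l)).
      rewrite (sum_eq _ (fun i => PhiSum phi (length (filter (in_block i) l)) (h i)
                          + if Nat.eqb i i0 then phi (S c) (h i0) else 0)).
      2: { intros i _. rewrite Hcount. unfold in_block at 2. rewrite Hbx.
           destruct (Nat.eqb_spec i0 i) as [->|Hne]; [rewrite Nat.eqb_refl|].
           - rewrite Nat.add_1_r. reflexivity.
           - destruct (Nat.eqb_spec i i0); [lia|]. rewrite Nat.add_0_r. lra. }
      rewrite sum_plus, sum_f_R0_indicator by exact Hi0.
      assert (Hc : (c <= length l)%nat) by apply filter_length_le.
      assert (phi (1 + length l) (v x) <= phi (1 + length l) (h i0))
        by (apply phi_nondecr; auto; lia).
      assert (phi (1 + length l) (h i0) <= phi (S c) (h i0))
        by (apply phi_antitone_index; [exact Hphi | lia | lia | lra]).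
      lra.
    + rewrite (Hnone x Hx Hbx), phi_zero by (exact Hphi || lia).
      rewrite (sum_eq _ (fun i => PhiSum phi (length (filter (in_block i) l)) (h i))); [lra|].
      intros i _. rewrite Hcount. unfold in_block at 2. rewrite Hbx, Nat.add_0_r. reflexivity.
Qed.

End BlockBound.

Lemma nonoverlapping_shared_endpoint I t t' : nonoverlapping I ->
  (t < length I)%nat -> (t' < length I)%nat ->
  fst (nth t I (0, 0)) <> snd (nth t I (0, 0)) ->
  fst (nth t' I (0, 0)) <> snd (nth t' I (0, 0)) ->
  snd (nth t I (0, 0)) = snd (nth t' I (0, 0)) \/ fst (nth t I (0, 0)) = fst (nth t' I (0, 0)) ->
  t = t'.
Proof.
  intros [HF HP] Ht Ht' Hne Hne' Hshared.
  destruct (Nat.eq_dec t t') as [|Htt']; [assumption|]. exfalso.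
  rewrite Forall_forall in HF.
  destruct (HF _ (nth_In I (0, 0) Ht)) as [_ [H1 _]].
  destruct (HF _ (nth_In I (0, 0) Ht')) as [_ [H2 _]].
  specialize (HP t t' Ht Ht' Htt'). unfold nonoverlap in HP. lra.
Qed.

Lemma dyadic_level_unique i i' y :
  / 2 ^ S i < y < / 2 ^ i -> / 2 ^ S i' < y < / 2 ^ i' -> i = i'.
Proof.
  intros Hi Hi'.
  assert (Hle : forall a b, (S a <= b)%nat -> / 2 ^ b <= / 2 ^ S a).
  { intros a b Hab.
    apply Rinv_le_contravar; [apply pow_lt; lra | apply Rle_pow; [lra | exact Hab]]. }
  destruct (Nat.lt_total i i') as [Hlt|[Heq|Hgt]]; [|exact Heq|].
  - specialize (Hle i i' Hlt). lra.
  - specialize (Hle i' i Hgt). lra.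
Qed.

Lemma sum_f_R0_geometric_le B : sum_f_R0 (fun i => 2 / 2 ^ i) B <= 4.
Proof.
  assert (Hsum : sum_f_R0 (fun i => 2 / 2 ^ i) B = 4 - 2 / 2 ^ B).
  { induction B as [|B IH]; [simpl; field|].
    rewrite tech5, IH. simpl. field. apply pow_nonzero. lra. }
  rewrite Hsum. assert (0 < 2 / 2 ^ B) by (apply Rdiv_lt_0_compat; [lra | apply pow_lt; lra]). lra.
Qed.

Section Spikes.

Variable phi : nat -> R -> R.
Hypothesis Hphi : is_Phi_sequence phi.
Variable k : nat -> nat.

(* Block [i] of spikes lives in [(2^-(i+1), 2^-i)]; [spike_pos i x] with [0 < x < k i + 1] is
   the point at relative position [x / (k i + 1)] of that interval. *)
Definition spike_pos (i : nat) (x : R) : R := (1 + x / (INR (k i) + 1)) / 2 ^ S i.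
Definition spike_pt (i s : nat) : R := spike_pos i (INR s + 1).
Definition spike_gap (i s : nat) : R := spike_pos i (INR s + / 2).

Definition is_spike (x : R) (q : nat * nat) : Prop :=
  (snd q < k (fst q))%nat /\ x = spike_pt (fst q) (snd q).

Definition spike_index (x : R) : option (nat * nat) :=
  if excluded_middle_informative (exists q, is_spike x q)
  then Some (epsilon (inhabits (O, O)) (is_spike x)) else None.

Definition spike_height (i : nat) : R := PhiInv phi (k i) 1 / 2 ^ i.

Definition spike_fun (x : R) : R :=
  match spike_index x with Some q => spike_height (fst q) | None => 0 end.

Definition spike_block (i : nat) : list (R * R) :=
  map (fun s => (spike_gap i s, spike_pt i s)) (seq 0 (k i)).

Lemma spike_pos_range i x : 0 < x < INR (k i) + 1 -> / 2 ^ S i < spike_pos i x < / 2 ^ i.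
Proof.
  intros Hx. assert (H2 : 0 < 2 ^ i) by (apply pow_lt; lra).
  assert (Hu : 0 < x / (INR (k i) + 1) < 1).
  { split; [apply Rdiv_lt_0_compat; lra|].
    apply Rmult_lt_reg_r with (INR (k i) + 1); [lra|]. field_simplify; lra. }
  unfold spike_pos. set (u := x / (INR (k i) + 1)) in *. change (2 ^ S i) with (2 * 2 ^ i).
  assert (E1 : (1 + u) / (2 * 2 ^ i) - / (2 * 2 ^ i) = u / (2 * 2 ^ i)) by (field; lra).
  assert (E2 : / 2 ^ i - (1 + u) / (2 * 2 ^ i) = (1 - u) / (2 * 2 ^ i)) by (field; lra).
  assert (0 < u / (2 * 2 ^ i)) by (apply Rdiv_lt_0_compat; lra).
  assert (0 < (1 - u) / (2 * 2 ^ i)) by (apply Rdiv_lt_0_compat; lra).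
  lra.
Qed.

Lemma spike_pos_le i x y : x <= y -> spike_pos i x <= spike_pos i y.
Proof.
  intros Hxy. assert (0 < INR (k i) + 1) by (assert (H := pos_INR (k i)); lra).
  assert (0 < 2 ^ S i) by (apply pow_lt; lra).
  unfold spike_pos, Rdiv. apply Rmult_le_compat_r; [left; apply Rinv_0_lt_compat; lra|].
  apply Rplus_le_compat_l, Rmult_le_compat_r; [left; apply Rinv_0_lt_compat|]; lra.
Qed.

Lemma spike_pos_inj i x y : spike_pos i x = spike_pos i y -> x = y.
Proof.
  intros Hxy. assert (0 < INR (k i) + 1) by (assert (H := pos_INR (k i)); lra).
  assert (0 < 2 ^ S i) by (apply pow_lt; lra).
  unfold spike_pos in Hxy.
  apply Rmult_eq_reg_r, Rplus_eq_reg_l, Rmult_eq_reg_r in Hxy; [exact Hxy | |];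
    apply Rinv_neq_0_compat; lra.
Qed.

Lemma spike_offset_range i s c : (s < k i)%nat -> 0 < c <= 1 -> 0 < INR s + c < INR (k i) + 1.
Proof.
  intros Hs Hc. assert (INR s + 1 <= INR (k i)) by (rewrite <- S_INR; apply le_INR; lia).
  assert (0 <= INR s) by apply pos_INR. lra.
Qed.

Lemma spike_pt_range i s : (s < k i)%nat -> / 2 ^ S i < spike_pt i s < / 2 ^ i.
Proof. intros Hs. apply spike_pos_range, spike_offset_range; [exact Hs | lra]. Qed.

Lemma spike_gap_range i s : (s < k i)%nat -> / 2 ^ S i < spike_gap i s < / 2 ^ i.
Proof. intros Hs. apply spike_pos_range, spike_offset_range; [exact Hs | lra]. Qed.

Lemma is_spike_unique x q q' : is_spike x q -> is_spike x q' -> q = q'.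
Proof.
  destruct q as [i s], q' as [i' s']. intros [Hs ->] [Hs' Hx]. simpl in *.
  assert (Hii : i = i').
  { apply dyadic_level_unique with (spike_pt i s); [apply spike_pt_range, Hs|].
    rewrite Hx. apply spike_pt_range, Hs'. }
  subst i'. apply spike_pos_inj in Hx. apply Rplus_eq_reg_r, INR_eq in Hx. subst. reflexivity.
Qed.

Lemma spike_gap_not_spike i s q : (s < k i)%nat -> ~ is_spike (spike_gap i s) q.
Proof.
  destruct q as [i' s']. intros Hs [Hs' Hx]. simpl in *.
  assert (Hii : i = i').
  { apply dyadic_level_unique with (spike_gap i s); [apply spike_gap_range, Hs|].
    rewrite Hx. apply spike_pt_range, Hs'. }
  subst i'. apply spike_pos_inj in Hx.
  assert (Hpar : INR (2 * s + 1) = INR (2 * s' + 2)) by (rewrite !plus_INR, !mult_INR; simpl; lra).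
  apply INR_eq in Hpar. lia.
Qed.

Lemma spike_index_some x q : spike_index x = Some q -> is_spike x q.
Proof.
  unfold spike_index. destruct (excluded_middle_informative _) as [Hex|]; [|discriminate].
  intros Hq. injection Hq as <-. apply epsilon_spec, Hex.
Qed.

Lemma spike_index_none x q : spike_index x = None -> ~ is_spike x q.
Proof.
  unfold spike_index. destruct (excluded_middle_informative _) as [|Hno]; [discriminate|].
  intros _ Hq. apply Hno. exists q. exact Hq.
Qed.

Lemma spike_index_spike x q : is_spike x q -> spike_index x = Some q.
Proof.
  intros Hq. destruct (spike_index x) as [q'|] eqn:E.
  - rewrite (is_spike_unique x q q' Hq (spike_index_some x q' E)). reflexivity.
  - exfalso. exact (spike_index_none x q E Hq).
Qed.

Hypothesis Hk : forall i, (1 <= k i)%nat.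

Lemma spike_height_pos i : 0 < spike_height i.
Proof.
  destruct (PhiInv_spec phi Hphi (k i) (Hk i)) as [Hpos _].
  apply Rdiv_lt_0_compat; [exact Hpos | apply pow_lt; lra].
Qed.

Lemma spike_fun_nonneg x : 0 <= spike_fun x.
Proof.
  unfold spike_fun. destruct (spike_index x); [left; apply spike_height_pos | lra].
Qed.

Lemma spike_fun_pt i s : (s < k i)%nat -> spike_fun (spike_pt i s) = spike_height i.
Proof.
  intros Hs. unfold spike_fun.
  rewrite (spike_index_spike _ (i, s)) by (split; [exact Hs | reflexivity]). reflexivity.
Qed.

Lemma spike_fun_gap i s : (s < k i)%nat -> spike_fun (spike_gap i s) = 0.
Proof.
  intros Hs. unfold spike_fun. destruct (spike_index (spike_gap i s)) as [q|] eqn:E; [|reflexivity].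
  exfalso. exact (spike_gap_not_spike i s q Hs (spike_index_some _ _ E)).
Qed.

(* An interval is charged to its endpoint with the larger value of [spike_fun]; as
   [spike_fun >= 0], its increment is at most that value. *)
Definition spike_tag (ab : R * R) : option ((nat * nat) * bool) :=
  if Req_EM_T (fst ab) (snd ab) then None
  else if Rle_dec (spike_fun (fst ab)) (spike_fun (snd ab))
  then option_map (fun q => (q, true)) (spike_index (snd ab))
  else option_map (fun q => (q, false)) (spike_index (fst ab)).

Lemma spike_tag_none ab : spike_tag ab = None -> incr spike_fun ab = 0.
Proof.
  unfold spike_tag, incr. destruct (Req_EM_T (fst ab) (snd ab)) as [->|_]; [lra|].
  assert (Ha := spike_fun_nonneg (fst ab)). assert (Hb := spike_fun_nonneg (snd ab)).
  destruct (Rle_dec _ _) as [Hle|Hlt].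
  - destruct (spike_index (snd ab)) eqn:E; [discriminate|]. intros _.
    assert (spike_fun (snd ab) = 0) by (unfold spike_fun; rewrite E; reflexivity). lra.
  - destruct (spike_index (fst ab)) eqn:E; [discriminate|]. intros _.
    assert (spike_fun (fst ab) = 0) by (unfold spike_fun; rewrite E; reflexivity). lra.
Qed.

Lemma spike_tag_some ab q side : spike_tag ab = Some (q, side) ->
  fst ab <> snd ab /\ is_spike (if side then snd ab else fst ab) q /\
  Rabs (incr spike_fun ab) <= spike_height (fst q).
Proof.
  unfold spike_tag, incr. destruct (Req_EM_T (fst ab) (snd ab)) as [_|Hne]; [discriminate|].
  assert (Ha := spike_fun_nonneg (fst ab)). assert (Hb := spike_fun_nonneg (snd ab)).
  destruct (Rle_dec _ _) as [Hle|Hlt].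
  - destruct (spike_index (snd ab)) as [q'|] eqn:E; [|discriminate].
    intros Hq. injection Hq as <- <-.
    assert (Hf : spike_fun (snd ab) = spike_height (fst q'))
      by (unfold spike_fun; rewrite E; reflexivity).
    split; [exact Hne | split; [apply spike_index_some, E|]].
    rewrite Rabs_right; lra.
  - destruct (spike_index (fst ab)) as [q'|] eqn:E; [|discriminate].
    intros Hq. injection Hq as <- <-.
    assert (Hf : spike_fun (fst ab) = spike_height (fst q'))
      by (unfold spike_fun; rewrite E; reflexivity).
    split; [exact Hne | split; [apply spike_index_some, E|]].
    rewrite Rabs_left1; lra.
Qed.

Definition spike_block_of (I : list (R * R)) (t : nat) : option nat :=
  match spike_tag (nth t I (0, 0)) with Some (q, _) => Some (fst q) | None => None end.

Lemma in_spike_block I i t : in_block nat (spike_block_of I) i t = true ->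
  exists s side, spike_tag (nth t I (0, 0)) = Some ((i, s), side).
Proof.
  unfold in_block, spike_block_of. destruct (spike_tag _) as [[[i' s] side]|]; [|discriminate].
  intros Hi. apply Nat.eqb_eq in Hi. subst. exists s, side. reflexivity.
Qed.

(* Two intervals of a nonoverlapping family cannot share a right (or a left) endpoint,
   so each of the [k i] spikes of block [i] is charged at most twice. *)
Lemma spike_block_count I i : nonoverlapping I ->
  (length (filter (in_block nat (spike_block_of I) i) (seq 0 (length I))) <= 2 * k i)%nat.
Proof.
  intros HI.
  set (key t := match spike_tag (nth t I (0, 0)) with Some (q, side) => (snd q, side)
                | None => (O, true) end).
  set (P := filter _ _).
  assert (HP : forall t, In t P -> (t < length I)%nat /\
             exists s side, spike_tag (nth t I (0, 0)) = Some ((i, s), side) /\ key t = (s, side)).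
  { intros t Ht. apply filter_In in Ht. destruct Ht as [Ht Hin]. apply in_seq in Ht.
    destruct (in_spike_block I i t Hin) as [s [side E]].
    split; [lia|]. exists s, side. split; [exact E|]. unfold key. rewrite E. reflexivity. }
  rewrite <- (length_map key P).
  replace (2 * k i)%nat with (length (list_prod (seq 0 (k i)) (true :: false :: nil)))
    by (rewrite length_prod, length_seq; simpl; lia).
  apply NoDup_incl_length.
  - apply NoDup_map_NoDup_ForallPairs; [|apply NoDup_filter, seq_NoDup].
    intros t t' Ht Ht' Hkey.
    destruct (HP t Ht) as [Htn [s [side [E Hk1]]]].
    destruct (HP t' Ht') as [Htn' [s' [side' [E' Hk2]]]].
    rewrite Hk1, Hk2 in Hkey. injection Hkey as <- <-.
    destruct (spike_tag_some _ _ _ E) as [Hne [[_ Hx] _]].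
    destruct (spike_tag_some _ _ _ E') as [Hne' [[_ Hx'] _]].
    apply (nonoverlapping_shared_endpoint I t t' HI Htn Htn' Hne Hne').
    destruct side; [left | right]; simpl in Hx, Hx'; congruence.
  - intros y Hy. apply in_map_iff in Hy. destruct Hy as [t [<- Ht]].
    destruct (HP t Ht) as [_ [s [side [E ->]]]].
    destruct (spike_tag_some _ _ _ E) as [_ [[Hs _] _]]. simpl in Hs.
    apply in_prod; [apply in_seq; lia | destruct side; simpl; auto].
Qed.

Lemma spike_block_PhiSum i c : (c <= 2 * k i)%nat -> PhiSum phi c (spike_height i) <= 2 / 2 ^ i.
Proof.
  intros Hc.
  destruct (PhiInv_spec phi Hphi (k i) (Hk i)) as [Hb Heq].
  assert (Hh := spike_height_pos i).
  assert (Hki : 0 < INR (k i)) by (apply lt_0_INR; specialize (Hk i); lia).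
  assert (Hconc := PhiSum_index_concave phi Hphi (k i) (2 * k i) (spike_height i)
                     (Hk i) ltac:(lia) ltac:(lra)).
  rewrite mult_INR in Hconc. replace (INR 2) with 2 in Hconc by (simpl; lra).
  assert (Hscale : PhiSum phi (k i) (spike_height i) <= / 2 ^ i).
  { assert (H2 : 0 < / 2 ^ i <= 1).
    { split; [apply Rinv_0_lt_compat, pow_lt; lra|].
      rewrite <- Rinv_1. apply Rinv_le_contravar; [lra | apply pow_R1_Rle; lra]. }
    unfold spike_height, Rdiv. rewrite Rmult_comm.
    eapply Rle_trans; [apply PhiSum_scale; [exact Hphi | lra | lra]|].
    rewrite Heq. lra. }
  apply Rle_trans with (PhiSum phi (2 * k i) (spike_height i)).
  - apply PhiSum_le_index; [exact Hphi | exact Hc | lra].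
  - apply Rmult_le_reg_l with (INR (k i)); [exact Hki|]. unfold Rdiv. nra.
Qed.

Lemma spike_fun_PhiVar I : nonoverlapping I -> PhiVarSum phi spike_fun 1 I <= 4.
Proof.
  intros HI. rewrite PhiVarSum_phi_cost, <- (map_nth_seq I (0, 0)) at 1. rewrite map_map.
  destruct (block_bound_exists nat (spike_block_of I) (seq 0 (length I))) as [B HB].
  eapply Rle_trans;
    [apply (phi_cost_le_block_sum phi Hphi nat _ (spike_block_of I) spike_height _ B)|].
  - intros t _ Hb. unfold spike_block_of in Hb.
    destruct (spike_tag _) as [[q side]|] eqn:E; [discriminate|].
    rewrite (spike_tag_none _ E). apply Rabs_R0.
  - intros t i Ht Hb. split; [|exact (HB t i Ht Hb)].
    unfold spike_block_of in Hb. destruct (spike_tag _) as [[q side]|] eqn:E; [|discriminate].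
    injection Hb as <-. split; [apply Rabs_pos | apply (spike_tag_some _ _ _ E)].
  - eapply Rle_trans; [|apply (sum_f_R0_geometric_le B)].
    apply sum_Rle. intros i _. apply spike_block_PhiSum, spike_block_count, HI.
Qed.

Lemma spike_block_nonoverlapping i : nonoverlapping (spike_block i).
Proof.
  assert (Hnth : forall s, (s < k i)%nat ->
            nth s (spike_block i) (0, 0) = (spike_gap i s, spike_pt i s)).
  { intros s Hs. unfold spike_block.
    assert (E := map_nth (fun s => (spike_gap i s, spike_pt i s)) (seq 0 (k i)) O s).
    rewrite seq_nth in E by exact Hs. simpl in E. rewrite <- E.
    apply nth_indep. rewrite length_map, length_seq. exact Hs. }
  assert (Hlen : length (spike_block i) = k i)
    by (unfold spike_block; rewrite length_map, length_seq; reflexivity).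
  assert (Hgap_pt : forall s, spike_gap i s <= spike_pt i s) by (intros s; apply spike_pos_le; lra).
  split.
  - apply Forall_forall. intros ab Hab. unfold spike_block in Hab. apply in_map_iff in Hab.
    destruct Hab as [s [<- Hs]]. apply in_seq in Hs.
    destruct (spike_gap_range i s ltac:(lia)). destruct (spike_pt_range i s ltac:(lia)).
    assert (0 < / 2 ^ S i) by (apply Rinv_0_lt_compat, pow_lt; lra).
    assert (/ 2 ^ i <= 1)
      by (rewrite <- Rinv_1; apply Rinv_le_contravar; [lra | apply pow_R1_Rle; lra]).
    unfold interval_in01. simpl. specialize (Hgap_pt s). lra.
  - intros a b Ha Hb Hab. rewrite Hlen in Ha, Hb. rewrite !Hnth by assumption.
    unfold nonoverlap. simpl.
    destruct (Nat.lt_gt_cases a b) as [[Hlt|Hgt] _]; [exact Hab| left | right];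
      apply spike_pos_le; [assert (INR (S a) <= INR b) by (apply le_INR; lia)
                          | assert (INR (S b) <= INR a) by (apply le_INR; lia)];
      rewrite S_INR in *; lra.
Qed.

Lemma spike_block_pSum p i : 0 < p ->
  pSum p spike_fun (spike_block i) = Rpower (INR (k i)) (1 / p) * spike_height i.
Proof.
  intros Hp. rewrite pSum_pow_sum. unfold spike_block. rewrite map_map.
  rewrite (map_ext_in _ (fun _ => spike_height i)).
  2: { intros s Hs. apply in_seq in Hs. unfold incr. simpl.
       rewrite spike_fun_pt, spike_fun_gap by lia. rewrite Rminus_0_r.
       apply Rabs_right. left. apply spike_height_pos. }
  rewrite pow_sum_const, length_seq.
  assert (Hh := spike_height_pos i).
  assert (Hki : 0 < INR (k i)) by (apply lt_0_INR; specialize (Hk i); lia).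
  rewrite rpow_mult, rpow_inv, rpow_pos_eq by (try apply rpow_nonneg; lra).
  reflexivity.
Qed.

End Spikes.

Lemma modulus_nondecr nu a b : modulus_of_variation nu -> (1 <= a)%nat -> (a <= b)%nat ->
  nu a <= nu b.
Proof.
  intros [_ [Hmon _]] Ha Hab. induction Hab as [|b Hab IH]; [lra|].
  specialize (Hmon b ltac:(lia)). lra.
Qed.

Lemma maxterm_unbounded_witness phi nu p : modulus_of_variation nu ->
  ~ (exists B, forall n, (1 <= n)%nat -> maxterm phi p n <= B * nu n) ->
  forall C, 0 < C -> exists k, (1 <= k)%nat /\ C * nu k < Rpower (INR k) (1 / p) * PhiInv phi k 1.
Proof.
  intros Hnu Hno C HC. apply NNPP. intros Hnot. apply Hno. exists C. intros n Hn.
  assert (Hnun := proj1 Hnu n Hn).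
  apply fold_Rmax_le; [nra|]. intros x Hx. apply in_map_iff in Hx.
  destruct Hx as [k [<- Hk]]. apply in_seq in Hk.
  apply Rle_trans with (C * nu k).
  - apply Rnot_lt_le. intros Hlt. apply Hnot. exists k. split; [lia | exact Hlt].
  - apply Rmult_le_compat_l; [lra|]. apply modulus_nondecr; [exact Hnu | lia | lia].
Qed.

Lemma necessity phi nu p : is_Phi_sequence phi -> modulus_of_variation nu -> 1 <= p ->
  (forall f, PhiBV phi f -> Vp p nu f) ->
  exists B, forall n, (1 <= n)%nat -> maxterm phi p n <= B * nu n.
Proof.
  intros Hphi Hnu Hp Hincl. apply NNPP. intros Hno.
  destruct (choice (fun i k => (1 <= k)%nat /\
              2 ^ i * 2 ^ i * nu k < Rpower (INR k) (1 / p) * PhiInv phi k 1)) as [k Hk].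
  { intros i. apply (maxterm_unbounded_witness phi nu p Hnu Hno).
    assert (0 < 2 ^ i) by (apply pow_lt; lra). nra. }
  assert (Hk1 : forall i, (1 <= k i)%nat) by (intros i; apply Hk).
  assert (Hf : PhiBV phi (spike_fun phi k)).
  { exists 1. split; [lra|]. exists 4. intros I HI.
    replace (fun x => 1 * spike_fun phi k x) with (spike_fun phi k)
      by (apply functional_extensionality; intros x; ring).
    apply spike_fun_PhiVar; assumption. }
  destruct (Hincl _ Hf) as [_ [M HM]].
  destruct (pow2_unbounded M) as [i Hi].
  assert (Hlen : length (spike_block k i) = k i)
    by (unfold spike_block; rewrite length_map, length_seq; reflexivity).
  specialize (HM (k i) (Hk1 i) _ (spike_block_nonoverlapping k i) Hlen).
  rewrite spike_block_pSum in HM by (assumption || lra).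
  destruct (Hk i) as [_ Hbig]. unfold spike_height in HM.
  assert (Hnuk := proj1 Hnu (k i) (Hk1 i)).
  assert (H2 : 0 < 2 ^ i) by (apply pow_lt; lra).
  set (X := Rpower (INR (k i)) (1 / p) * PhiInv phi (k i) 1) in *.
  replace (Rpower (INR (k i)) (1 / p) * (PhiInv phi (k i) 1 / 2 ^ i)) with (X / 2 ^ i) in HM
    by (unfold X; field; lra).
  assert (2 ^ i < X / 2 ^ i / nu (k i)); [|lra].
  apply Rmult_lt_reg_r with (2 ^ i * nu (k i)); [nra|].
  replace (X / 2 ^ i / nu (k i) * (2 ^ i * nu (k i))) with X by (field; lra). lra.
Qed.

Lemma bounded_above_of_eventually (u : nat -> R) C N :
  (forall n, (N <= n)%nat -> u n <= C) -> exists B, forall n, u n <= B.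
Proof.
  revert C. induction N as [|N IH]; intros C HC; [exists C; intros n; apply HC; lia|].
  apply (IH (Rmax C (u N))). intros n Hn. destruct (Nat.eq_dec n N) as [->|Hne]; [apply Rmax_r|].
  apply Rle_trans with C; [apply HC; lia | apply Rmax_l].
Qed.

Lemma LimSup_seq_lt_p_infty_iff (u : nat -> R) :
  Rbar_lt (LimSup_seq u) p_infty <-> exists B, forall n, u n <= B.
Proof.
  split.
  - intros Hlt. destruct (ex_LimSup_seq u) as [l Hl].
    rewrite (is_LimSup_seq_unique _ _ Hl) in Hlt.
    destruct l as [l| |]; simpl in Hl, Hlt; [| contradiction |].
    + destruct (Hl (mkposreal 1 Rlt_0_1)) as [_ [N HN]].
      apply (bounded_above_of_eventually u (l + 1) N). intros n Hn. left. apply HN, Hn.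
    + destruct (Hl 0) as [N HN].
      apply (bounded_above_of_eventually u 0 N). intros n Hn. left. apply HN, Hn.
  - intros [B HB]. apply Rbar_le_lt_trans with (LimSup_seq (fun _ => B)).
    + apply LimSup_le. exists O. intros n _. apply HB.
    + rewrite LimSup_seq_const. exact I.
Qed.

Lemma crit_seq_bounded_iff phi p nu : modulus_of_variation nu ->
  (exists B, forall n, crit_seq phi p nu n <= B) <->
  (exists B, forall n, (1 <= n)%nat -> maxterm phi p n <= B * nu n).
Proof.
  intros [Hpos _]. unfold crit_seq. split; intros [B HB].
  - exists B. intros n Hn. specialize (HB n). assert (Hnu := Hpos n Hn).
    replace (maxterm phi p n) with (nu n * (/ nu n * maxterm phi p n)) by (field; lra).
    rewrite Rmult_comm. apply Rmult_le_compat_r; lra.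
  - exists (Rmax B 0). intros [|n].
    + unfold maxterm. simpl. rewrite Rmult_0_r. apply Rmax_r.
    + assert (Hnu := Hpos (S n) ltac:(lia)). specialize (HB (S n) ltac:(lia)).
      apply Rle_trans with B; [|apply Rmax_l].
      apply Rmult_le_reg_l with (nu (S n)); [exact Hnu|].
      rewrite <- Rmult_assoc, Rinv_r, Rmult_1_l by lra. lra.
Qed.

Theorem theorem6p2 (phi : nat -> R -> R) (nu : nat -> R) (p : R) :
  is_Phi_sequence phi -> modulus_of_variation nu -> 1 <= p ->
  ((forall f : R -> R, PhiBV phi f -> Vp p nu f) <->
   Rbar_lt (LimSup_seq (crit_seq phi p nu)) p_infty).
Proof.
  intros Hphi Hnu Hp.
  rewrite LimSup_seq_lt_p_infty_iff, crit_seq_bounded_iff by exact Hnu.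
  split; [apply necessity | apply sufficiency]; assumption.
Qed.
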